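(* Let $S\subset\mathbb{R}^n$ and $U_0\subset\mathbb{R}^{n\times n}$ be polyhedra (a safety region and an initial uncertainty set) and let $A_\star\in U_0$ be the unknown true matrix. Then one-step safe learning is possible if and only if the One-Step Safe Learning Algorithm described below, run with an arbitrary choice of cost vector $c\in\mathbb{R}^n$ and an arbitrary constant $\varepsilon\in(0,1]$, returns a matrix (rather than declaring that one-step safe learning is impossible).
   Context: System: $x_{t+1}=A_\star x_t$ with $A_\star$ unknown, $A_\star\in U_0$. Given measurements $(x_j,y_j)$, $j=1,\dots,k$, with $y_j=A_\star x_j$, let $U_k=\{A\in U_0\mid Ax_j=y_j,\ j=1,\dots,k\}$ and let $S^1_k=\{x\in S\mid Ax\in S\ \forall A\in U_k\}$ (the set of points that are one-step safe under all matrices consistent with the data). Definition (one-step safe learning). One-step safe learning is possible if for some nonnegative integer $m$ one can sequentially choose vectors $x_k\in S$, $k=1,\dots,m$ (each choice may depend on the previous observations), observing $y_k=A_\star x_k$ after each choice, such that (1) (safety) for $k=1,\dots,m$, $Ax_k\in S$ for all $A\in U_{k-1}$, and (2) (learning) $U_m$ is a singleton. One-Step Safe Learning Algorithm (input $S,U_0,c,\varepsilon$). For $k=0,1,\dots,n-1$: (a) if $U_k$ is a singleton, return its unique element; (b) let $x_k^\star$ be an optimal solution of $\min\{c^Tx \mid x\in S^1_k\}$ (a linear program); (c) if $x_k^\star$ is linearly independent from $\{x_1,\dots,x_k\}$, set $x_{k+1}=x_k^\star$; otherwise compute a basis $B_k\subset S^1_k$ of $\mathrm{span}(S^1_k)$,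 and if some $z\in B_k$ is linearly independent from $\{x_1,\dots,x_k\}$, set $x_{k+1}=(1-\varepsilon)x_k^\star+\varepsilon z$ for the first such $z$, while if no element of $B_k$ is linearly independent from $\{x_1,\dots,x_k\}$, stop and declare that one-step safe learning is impossible; (d) observe $y_{k+1}=A_\star x_{k+1}$. If the loop completes, let $X=[x_1,\dots,x_n]$, $Y=[y_1,\dots,y_n]$ and return $YX^{-1}$. *)

From HB Require Import structures.
From mathcomp Require Import all_boot all_order all_algebra.
From mathcomp Require Import reals.
Set Implicit Arguments. Unset Strict Implicit. Unset Printing Implicit Defensive.
Import Order.TTheory GRing.Theory Num.Theory.
Local Open Scope ring_scope.

Section Defs.
Variables (R : realType) (n : nat).

Notation vec := 'cV[R]_n.
Notation mat := 'M[R]_n.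

Definition polyhedronV (S : vec -> Prop) : Prop :=
  exists (m : nat) (M : 'M[R]_(m, n)) (b : 'cV[R]_m),
    forall x, S x <-> (forall i, (M *m x) i 0 <= b i 0).

Definition polyhedronM (U : mat -> Prop) : Prop :=
  exists (m : nat) (M : 'M[R]_(m, n * n)) (b : 'cV[R]_m),
    forall A, U A <-> (forall i, (M *m (mxvec A)^T) i 0 <= b i 0).

Definition Uset (U0 : mat -> Prop) (data : seq (vec * vec)) (A : mat) : Prop :=
  U0 A /\ (forall p, p \in data -> A *m p.1 = p.2).

Definition S1set (S : vec -> Prop) (U0 : mat -> Prop) (data : seq (vec * vec))
  (x : vec) : Prop :=
  S x /\ (forall A, Uset U0 data A -> S (A *m x)).

Definition is_singleton (U : mat -> Prop) : Prop :=
  exists A, U A /\ (forall B, U B -> B = A).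

Definition rowsmx (xs : seq vec) : 'M[R]_(size xs, n) :=
  \matrix_(i < size xs) (xs`_i)^T.

Definition indep_from (x : vec) (xs : seq vec) : Prop :=
  ~ (x^T <= rowsmx xs)%MS.

Definition basis_in (P : vec -> Prop) (B : seq vec) : Prop :=
  (forall z, z \in B -> P z) /\ row_free (rowsmx B) /\
  (forall x, P x -> (x^T <= rowsmx B)%MS).

Definition lp_opt (c : vec) (P : vec -> Prop) (x : vec) : Prop :=
  P x /\ (forall y, P y -> (c^T *m x) 0 0 <= (c^T *m y) 0 0).

Definition xs_of (data : seq (vec * vec)) : seq vec := map fst data.

Definition Xmat (data : seq (vec * vec)) : mat :=
  \matrix_(i < n, j < n) (nth (0, 0) data j).1 i 0.
Definition Ymat (data : seq (vec * vec)) : mat :=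
  \matrix_(i < n, j < n) (nth (0, 0) data j).2 i 0.

(* Since
   Astar is fixed, the observations are deterministic, so an adaptive choice
   rule realizes exactly some sequence x_1..x_m; we quantify over these. *)
Definition data_of (Astar : mat) (xs : seq vec) : seq (vec * vec) :=
  [seq (x, Astar *m x) | x <- xs].

Definition one_step_safe_learning_possible (S : vec -> Prop) (U0 : mat -> Prop)
  (Astar : mat) : Prop :=
  exists xs : seq vec,
    (forall k, (k < size xs)%N ->
       S (xs`_k) /\
       (forall A, Uset U0 (data_of Astar (take k xs)) A -> S (A *m xs`_k))) /\
    is_singleton (Uset U0 (data_of Astar xs)).

Inductive outcome : Type :=
| Returns of mat
| Impossible.

(* alg_run S U0 Astar c eps data out : starting from iteration k = size data,
   with measurements data collected so far, some execution of the
   One-Step Safe Learning Algorithm ends with outcome out.  All admissible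
   choices (optimal LP solution, basis B_k and its ordering) are allowed. *)
Inductive alg_run (S : vec -> Prop) (U0 : mat -> Prop) (Astar : mat) (c : vec)
  (eps : R) : seq (vec * vec) -> outcome -> Prop :=
| run_single data A :
    (size data < n)%N ->
    Uset U0 data A -> (forall B, Uset U0 data B -> B = A) ->
    alg_run S U0 Astar c eps data (Returns A)
| run_indep data xstar out :
    (size data < n)%N ->
    ~ is_singleton (Uset U0 data) ->
    lp_opt c (S1set S U0 data) xstar ->
    indep_from xstar (xs_of data) ->
    alg_run S U0 Astar c eps (rcons data (xstar, Astar *m xstar)) out ->
    alg_run S U0 Astar c eps data out
| run_perturb data xstar (B : seq vec) j out :
    (size data < n)%N ->
    ~ is_singleton (Uset U0 data) ->
    lp_opt c (S1set S U0 data) xstar ->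
    ~ indep_from xstar (xs_of data) ->
    basis_in (S1set S U0 data) B ->
    (j < size B)%N ->
    indep_from (B`_j) (xs_of data) ->
    (forall i, (i < j)%N -> ~ indep_from (B`_i) (xs_of data)) ->
    let x := (1 - eps) *: xstar + eps *: B`_j in
    alg_run S U0 Astar c eps (rcons data (x, Astar *m x)) out ->
    alg_run S U0 Astar c eps data out
| run_stop data xstar (B : seq vec) :
    (size data < n)%N ->
    ~ is_singleton (Uset U0 data) ->
    lp_opt c (S1set S U0 data) xstar ->
    ~ indep_from xstar (xs_of data) ->
    basis_in (S1set S U0 data) B ->
    (forall i, (i < size B)%N -> ~ indep_from (B`_i) (xs_of data)) ->
    alg_run S U0 Astar c eps data Impossible
| run_done data :
    size data = n ->
    alg_run S U0 Astar c eps data (Returns (Ymat data *m invmx (Xmat data))).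

End Defs.

(* Every query of the algorithm is one-step safe for the data gathered so far
   and lies outside the span of the earlier queries.  Hence a run that returns
   has produced a safe learning sequence: either U_k has become a singleton, or
   n independent queries determine the matrix, so that U_n = {A_star}.  The
   perturbed query (1 - eps) x* + eps z stays safe because S, and with it S^1_k,
   is convex, and it leaves the span because eps <> 0.
   Conversely, the algorithm gives up only when S^1_k lies in the span of the
   queries x_1, ..., x_k.  Every matrix of U_k agrees with A_star on that span,
   so by induction the points of any safe query sequence stay in the span; thus
   U_k is contained in every later uncertainty set, and none of them is a
   singleton. *)
From HB Require Import structures.
From mathcomp Require Import all_boot all_order all_algebra.
From mathcomp Require Import reals.
From mathcomp Require Import zify ring lra.
Set Implicit Arguments. Unset Strict Implicit. Unset Printing Implicit Defensive.
Import Order.TTheory GRing.Theory Num.Theory.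
Local Open Scope ring_scope.

Section RowSpan.
Variables (R : realType) (n : nat).
Implicit Types (xs : seq 'cV[R]_n) (x : 'cV[R]_n).

Lemma nth_rowsmx_sub xs i : (i < size xs)%N -> ((xs`_i)^T <= rowsmx xs)%MS.
Proof. by move=> lt_i; apply: (eq_row_sub (Ordinal lt_i)); rewrite rowK. Qed.

Lemma rowsmx_sub m xs (M : 'M[R]_(m, n)) :
  (forall i, (i < size xs)%N -> ((xs`_i)^T <= M)%MS) -> (rowsmx xs <= M)%MS.
Proof. by move=> xsM; apply/row_subP => i; rewrite rowK; apply: xsM. Qed.

Lemma indep_fromPn x xs : ~ indep_from x xs <-> (x^T <= rowsmx xs)%MS.
Proof. by split=> [|xs_x]; [apply: contra_notT => /negP | apply]. Qed.

Lemma row_free_rcons xs x :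
  row_free (rowsmx xs) -> indep_from x xs -> row_free (rowsmx (rcons xs x)).
Proof.
move=> /eqP free_xs x_indep; have size_xsx := size_rcons xs x.
have sub_xs : (rowsmx xs <= rowsmx (rcons xs x))%MS.
  apply: rowsmx_sub => i lt_i; have := @nth_rowsmx_sub (rcons xs x) i.
  by rewrite nth_rcons lt_i; apply; rewrite size_rcons ltnS ltnW.
have sub_x : (x^T <= rowsmx (rcons xs x))%MS.
  have := @nth_rowsmx_sub (rcons xs x) (size xs).
  by rewrite nth_rcons ltnn eqxx; apply; rewrite size_rcons.
have : (rowsmx xs < rowsmx (rcons xs x))%MS.
  rewrite ltmxE sub_xs /=; apply/negP => sub_rcons.
  by apply: x_indep; apply: submx_trans sub_x sub_rcons.
rewrite ltmxErank free_xs => /andP[_ lt_rank].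
apply/eqP; have := rank_leq_row (rowsmx (rcons xs x)).
by move: lt_rank size_xsx; lia.
Qed.

Lemma indep_from_combination (a b : R) u v xs : b != 0 ->
  ~ indep_from u xs -> indep_from v xs -> indep_from (a *: u + b *: v) xs.
Proof.
move=> nz_b /indep_fromPn xs_u v_indep xs_uv; apply: v_indep.
have -> : v^T = b^-1 *: ((a *: u + b *: v)^T - a *: u^T).
  by apply/matrixP => i j; rewrite !mxE; field.
by rewrite scalemx_sub // addmx_sub // -scaleNr scalemx_sub.
Qed.

Lemma mulmx_rowsmx_agree m p (A B : 'M[R]_(m, n)) xs (v : 'M[R]_(n, p)) :
  {in xs, forall x, A *m x = B *m x} -> (v^T <= rowsmx xs)%MS -> A *m v = B *m v.
Proof.
move=> eq_AB /submxP[D def_v]; apply/eqP; rewrite -subr_eq0 -mulmxBl.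
have rowsmx_ker : rowsmx xs *m (A - B)^T = 0.
  apply/row_matrixP => i; rewrite row_mul rowK row0 -trmx_mul mulmxBl.
  by rewrite eq_AB ?subrr ?trmx0 ?mem_nth.
by rewrite -[_ *m v]trmxK trmx_mul def_v -mulmxA rowsmx_ker mulmx0 trmx0.
Qed.

Lemma basis_in_sub (P : 'cV[R]_n -> Prop) B xs : basis_in P B ->
  (forall i, (i < size B)%N -> ~ indep_from B`_i xs) ->
  forall x, P x -> (x^T <= rowsmx xs)%MS.
Proof.
move=> [_ [_ span_B]] B_xs x Px; apply: submx_trans (span_B x Px) _.
by apply: rowsmx_sub => i /B_xs/indep_fromPn.
Qed.

End RowSpan.

Section Convexity.
Variables (R : realType) (n : nat) (S : 'cV[R]_n -> Prop).
Hypothesis S_poly : polyhedronV S.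

Lemma polyhedronV_convex u v (e : R) : 0 <= e <= 1 ->
  S u -> S v -> S ((1 - e) *: u + e *: v).
Proof.
case: S_poly => m [M [b memS]] /andP[e_ge0 e_le1] /memS Su /memS Sv.
apply/memS => i; move: (Su i) (Sv i).
by rewrite mulmxDr -!scalemxAr !mxE; nra.
Qed.

Lemma S1set_convex (U0 : 'M[R]_n -> Prop) data u v (e : R) : 0 <= e <= 1 ->
  S1set S U0 data u -> S1set S U0 data v -> S1set S U0 data ((1 - e) *: u + e *: v).
Proof.
move=> e01 [Su safe_u] [Sv safe_v]; split; first exact: polyhedronV_convex.
move=> A UA; rewrite mulmxDr -!scalemxAr.
by apply: polyhedronV_convex => //; [apply: safe_u | apply: safe_v].
Qed.

End Convexity.

Section SafeLearning.
Variables (R : realType) (n : nat) (S : 'cV[R]_n -> Prop) (U0 : 'M[R]_n -> Prop).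
Variable Astar : 'M[R]_n.
Hypothesis U0_Astar : U0 Astar.
Implicit Types (xs ys : seq 'cV[R]_n) (x : 'cV[R]_n) (A : 'M[R]_n).

Definition safe_queries xs : Prop :=
  forall k, (k < size xs)%N -> S1set S U0 (data_of Astar (take k xs)) xs`_k.

Lemma xs_of_data_of xs : xs_of (data_of Astar xs) = xs.
Proof. by elim: xs => //= x xs ->. Qed.

Lemma data_of_rcons xs x :
  data_of Astar (rcons xs x) = rcons (data_of Astar xs) (x, Astar *m x).
Proof. exact: map_rcons. Qed.

Lemma safe_queries_rcons xs x :
  safe_queries (rcons xs x) <-> safe_queries xs /\ S1set S U0 (data_of Astar xs) x.
Proof.
rewrite /safe_queries size_rcons -cats1; split=> [safe | [safe safe_x] k].
  split=> [k lt_k|]; last first.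
    by have := safe (size xs); rewrite take_size_cat // nth_cat ltnn subnn; apply.
  have := safe k; rewrite takel_cat ?(ltnW lt_k) // nth_cat lt_k; apply.
  exact: ltnW.
rewrite ltnS leq_eqVlt => /orP[/eqP-> | lt_k].
  by rewrite take_size_cat // nth_cat ltnn subnn.
by rewrite takel_cat ?(ltnW lt_k) // nth_cat lt_k; apply: safe.
Qed.

Lemma Uset_data_of xs A :
  Uset U0 (data_of Astar xs) A <-> U0 A /\ {in xs, forall x, A *m x = Astar *m x}.
Proof.
split=> [[U0_A eqA] | [U0_A eqA]]; split=> //.
  by move=> x x_xs; rewrite (eqA (x, Astar *m x)) // map_f.
by move=> _ /mapP[x x_xs ->]; apply: eqA.
Qed.

Lemma Uset_data_of_span xs ys A : {in ys, forall y, (y^T <= rowsmx xs)%MS} ->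
  Uset U0 (data_of Astar xs) A -> Uset U0 (data_of Astar ys) A.
Proof.
move=> ys_xs /Uset_data_of[U0_A eqA]; apply/Uset_data_of; split=> // y /ys_xs.
exact: mulmx_rowsmx_agree.
Qed.

Lemma Uset_row_full_singleton xs :
  row_full (rowsmx xs) -> is_singleton (Uset U0 (data_of Astar xs)).
Proof.
move=> full_xs; exists Astar; split; first exact/Uset_data_of.
move=> B /Uset_data_of[_ eqB]; rewrite -[B]mulmx1 -[Astar]mulmx1.
by apply: mulmx_rowsmx_agree eqB _; rewrite submx_full.
Qed.

Lemma safe_queries_span xs ys :
  (forall x, S1set S U0 (data_of Astar xs) x -> (x^T <= rowsmx xs)%MS) ->
  safe_queries ys -> {in ys, forall y, (y^T <= rowsmx xs)%MS}.
Proof.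
move=> stuck; elim/last_ind: ys => [// | ys y IH].
move=> /safe_queries_rcons[/IH ys_xs [Sy safe_y]] z.
rewrite mem_rcons in_cons => /orP[/eqP-> | /ys_xs //].
by apply: stuck; split=> // A /(Uset_data_of_span ys_xs); apply: safe_y.
Qed.

Lemma stuck_not_learnable xs :
  ~ is_singleton (Uset U0 (data_of Astar xs)) ->
  (forall x, S1set S U0 (data_of Astar xs) x -> (x^T <= rowsmx xs)%MS) ->
  ~ one_step_safe_learning_possible S U0 Astar.
Proof.
move=> not_single stuck [ys [safe_ys [A0 [_ single_ys]]]]; apply: not_single.
have ys_xs := safe_queries_span stuck safe_ys.
have Uxs_Astar : Uset U0 (data_of Astar xs) Astar by exact/Uset_data_of.
exists Astar; split=> // B /(Uset_data_of_span ys_xs)/single_ys->.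
by rewrite (single_ys _ (Uset_data_of_span ys_xs Uxs_Astar)).
Qed.

End SafeLearning.

Section Algorithm.
Variables (R : realType) (n : nat) (S : 'cV[R]_n -> Prop) (U0 : 'M[R]_n -> Prop).
Variables (Astar : 'M[R]_n) (c : 'cV[R]_n) (eps : R).
Hypotheses (S_poly : polyhedronV S) (U0_Astar : U0 Astar) (eps_01 : 0 < eps <= 1).

Lemma alg_run_sound data out : alg_run S U0 Astar c eps data out ->
  forall xs, data = data_of Astar xs -> safe_queries S U0 Astar xs ->
  row_free (rowsmx xs) -> (exists A, out = Returns A) ->
  one_step_safe_learning_possible S U0 Astar.
Proof.
elim=> {data out}.
- move=> data A _ U_A single_A xs def_data safe_xs _ _; subst data.
  by exists xs; split=> //; exists A.
- move=> data xstar out _ _ [safe_xstar _] indep_xstar _ IH xs def_data safe_xs free_xs.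
  subst data; rewrite xs_of_data_of in indep_xstar.
  apply: (IH (rcons xs xstar)); first by rewrite data_of_rcons.
    exact/safe_queries_rcons.
  exact: row_free_rcons.
- move=> data xstar B j out _ _ [safe_xstar _] dep_xstar [S1_B _] lt_j indep_Bj _ x _ IH.
  move=> xs def_data safe_xs free_xs; subst data.
  rewrite xs_of_data_of in dep_xstar indep_Bj.
  have /andP[eps_gt0 eps_le1] := eps_01.
  apply: (IH (rcons xs x)); first by rewrite data_of_rcons.
    apply/safe_queries_rcons; split=> //.
    by apply: S1set_convex => //; [rewrite ltW | apply: S1_B; rewrite mem_nth].
  by apply: row_free_rcons => //; apply: indep_from_combination; rewrite ?gt_eqF.
- by move=> _ xstar B _ _ _ _ _ _ xs _ _ _ [].
- move=> data size_n xs def_data safe_xs /eqP rank_xs _; subst data.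
  exists xs; split=> //; apply: Uset_row_full_singleton => //.
  by rewrite /row_full rank_xs; move: size_n; rewrite size_map => ->.
Qed.

Lemma alg_run_complete data out : alg_run S U0 Astar c eps data out ->
  forall xs, data = data_of Astar xs ->
  one_step_safe_learning_possible S U0 Astar -> exists A, out = Returns A.
Proof.
elim=> {data out}.
- by move=> data A *; exists A.
- move=> data xstar out _ _ _ _ _ IH xs def_data; subst data.
  exact: IH (esym (data_of_rcons _ _ _)).
- move=> data xstar B j out _ _ _ _ _ _ _ _ x _ IH xs def_data; subst data.
  exact: IH (esym (data_of_rcons _ _ _)).
- move=> data xstar B _ not_single _ _ basis_B dep_B xs def_data; subst data.
  rewrite xs_of_data_of in dep_B.
  by move/(stuck_not_learnable U0_Astar not_single (basis_in_sub basis_B dep_B)).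
- by move=> data *; eexists.
Qed.

End Algorithm.

Theorem theorem7 (R : realType) (n : nat)
  (S : 'cV[R]_n -> Prop) (U0 : 'M[R]_n -> Prop) (Astar : 'M[R]_n) :
  polyhedronV S -> polyhedronM U0 -> U0 Astar ->
  forall (c : 'cV[R]_n) (eps : R), 0 < eps <= 1 ->
  forall out : outcome R n, alg_run S U0 Astar c eps [::] out ->
  (one_step_safe_learning_possible S U0 Astar <-> exists A, out = Returns A).
Proof.
move=> S_poly _ U0_Astar c eps eps_01 out run; split.
  exact: (alg_run_complete U0_Astar run (xs := [::])).
apply: (alg_run_sound S_poly U0_Astar eps_01 run (xs := [::])) => //.
by rewrite /row_free -leqn0 rank_leq_row.
Qed.
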